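(* Let $\alpha\ge 1$ and let $G=(V,E)$ be a finite connected undirected unweighted $\alpha$-almost regular graph with $n$ vertices. If $r\ge\alpha^2$, then for every $\lambda\in[0,1]$ and every nonempty initial mutant set $S_0\subseteq V$, the $\lambda$-mixed Moran process with fitness $r$ has expected absorption time $O_r(n^4)$ and fixation probability $\Omega_r(n^{-2})$; that is, there are constants $C_r,c_r>0$ depending only on $r$ (not on $G$, $n$, $\lambda$ or $S_0$) with absorption time at most $C_r n^4$ and $\mathrm{fp}^{\lambda,r}_G(S_0)\ge c_r n^{-2}$.
   Context: A graph is $\alpha$-almost regular if its maximum degree is at most $\alpha$ times its minimum degree. The $\lambda$-mixed Moran process on a connected graph $G=(V,E)$ with $n=|V|\ge 2$: each vertex hosts a resident (fitness $1$) or mutant (fitness $r>0$); the state is the mutant set $S_t\subseteq V$. Each step, independently: with probability $\lambda$ a Birth-death step (a vertex $u$ chosen with probability proportional to fitness among all vertices; a uniformly random neighbor of $u$ takes $u$'s type); with probability $1-\lambda$ a death-Birth step (a uniformly random vertex $v$ dies; a neighbor $u$ of $v$ chosen with probability proportional to fitness among the neighbors of $v$; $v$ takes $u$'s type). $\mathrm{fp}^{\lambda,r}_G(S_0)$ is the probability of reaching $S_t=V$ from $S_0$; the absorption time is the expected number of steps until $S_t\in\{\emptyset,V\}$. *)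

From HB Require Import structures.
From mathcomp Require Import all_boot all_order all_algebra.
From mathcomp Require Import all_classical all_reals all_analysis.
Set Implicit Arguments. Unset Strict Implicit. Unset Printing Implicit Defensive.
Import Order.TTheory GRing.Theory Num.Theory numFieldNormedType.Exports.
Local Open Scope ring_scope.

Section Moran.
Variables (R : realType) (V : finType) (e : rel V).

Definition simple_graph := symmetric e /\ irreflexive e.
Definition graph_connected := forall x y : V, connect e x y.
Definition deg (v : V) : nat := #|[set u | e v u]|.
Definition almost_regular (alpha : R) :=
  forall u v : V, (deg u)%:R <= alpha * (deg v)%:R.

Variables (lam r : R).

Definition fit (S : {set V}) (x : V) : R := if x \in S then r else 1.
Definition total_fit (S : {set V}) : R := \sum_(x : V) fit S x.
Definition nbr_fit (S : {set V}) (v : V) : R := \sum_(u : V | e v u) fit S u.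

Definition upd (S : {set V}) (u v : V) : {set V} :=
  if u \in S then v |: S else S :\ v.

Definition moranP (S S' : {set V}) : R :=
  lam * (\sum_(u : V) \sum_(v : V | e u v)
           fit S u / total_fit S * ((deg u)%:R)^-1 * (upd S u v == S')%:R)
  + (1 - lam) * (\sum_(v : V) \sum_(u : V | e v u)
           (#|V|%:R)^-1 * (fit S u / nbr_fit S v) * (upd S u v == S')%:R).

Fixpoint moranPt (t : nat) (S S' : {set V}) : R :=
  match t with
  | 0 => (S == S')%:R
  | t'.+1 => \sum_(S'' : {set V}) moranPt t' S S'' * moranP S'' S'
  end.

Definition fix_prob (S0 : {set V}) : R :=
  limn (fun t => moranPt t S0 [set: V] : R^o).

(* Pr[T > t], T the absorption time (first t with S_t in {empty, V}) *)
Definition not_absorbed (S0 : {set V}) (t : nat) : R :=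
  \sum_(S : {set V} | (S != finset.set0) && (S != [set: V])) moranPt t S0 S.

(* expected absorption time E[T] = sum_{t>=0} Pr[T > t], in the extended reals *)
Definition absorption_time (S0 : {set V}) : \bar R :=
  (\sum_(0 <= t <oo) (not_absorbed S0 t)%:E)%E.

End Moran.

(* The degree-weighted mutant count degsum S = sum_(w in S) deg w is a
   submartingale once r >= alpha^2: across every mutant-resident edge (u, v), the
   probability that u invades v, weighted by deg v, dominates the reverse move
   weighted by deg u.  While the process is unabsorbed some such edge exists, so
   degsum^2 gains at least deg x / (n alpha^2) per step in expectation; as
   degsum^2 stays below (n alpha deg x)^2, the expected number of unabsorbed
   steps is at most r^2 n^4.  Finally
   deg x0 <= degsum S0 <= E[degsum S_t] <= degsum V * (Pr[S_t = V] + Pr[T > t]),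
   and a t with Pr[T > t] <= 1 / (2 n alpha) gives fixation probability at least
   1 / (2 r n^2). *)

From HB Require Import structures.
From mathcomp Require Import all_boot all_order all_algebra.
From mathcomp Require Import all_classical all_reals all_analysis.
From mathcomp Require Import ring lra.
Set Implicit Arguments. Unset Strict Implicit. Unset Printing Implicit Defensive.
Import Order.TTheory GRing.Theory Num.Theory.
Local Open Scope ring_scope.

(** * Iterated Markov kernels *)

Section KernelPowers.
Variables (R : numDomainType) (T : finType) (P : T -> T -> R).
Hypothesis P_ge0 : forall x y, 0 <= P x y.
Hypothesis P_sum1 : forall x, \sum_y P x y = 1.
Implicit Types (x y z : T) (f g a : T -> R).

Definition kexp x f : R := \sum_y P x y * f y.

Fixpoint kpow t x y : R :=
  if t is t'.+1 then \sum_z kpow t' x z * P z y else (x == y)%:R.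

Definition kexpt t x f : R := \sum_y kpow t x y * f y.

Lemma kpow_ge0 t x y : 0 <= kpow t x y.
Proof.
elim: t y => [|t IH] y /=; first by rewrite ler0n.
by apply: sumr_ge0 => z _; rewrite mulr_ge0.
Qed.

Lemma kexpt0 x f : kexpt 0 x f = f x.
Proof.
rewrite /kexpt (bigD1 x) //= eqxx mul1r big1 ?addr0 // => y yx.
by rewrite eq_sym (negPf yx) mul0r.
Qed.

Lemma kexptS t x f : kexpt t.+1 x f = kexpt t x (kexp^~ f).
Proof.
rewrite /kexpt /kexp /=; under eq_bigr do rewrite mulr_suml.
rewrite exchange_big; apply: eq_bigr => z _.
by rewrite mulr_sumr; apply: eq_bigr => y _; rewrite mulrA.
Qed.

Lemma ler_kexpt t x f g : (forall y, f y <= g y) -> kexpt t x f <= kexpt t x g.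
Proof. by move=> fg; apply: ler_sum => y _; rewrite ler_wpM2l ?kpow_ge0. Qed.

Lemma kexptD t x f g : kexpt t x (fun y => f y + g y) = kexpt t x f + kexpt t x g.
Proof. by rewrite /kexpt -big_split; apply: eq_bigr => y _; rewrite mulrDr. Qed.

Lemma kexptZ t x (c : R) f : kexpt t x (fun y => c * f y) = c * kexpt t x f.
Proof. by rewrite /kexpt mulr_sumr; apply: eq_bigr => y _; rewrite mulrCA. Qed.

Lemma kexp_cst x (c : R) : kexp x (fun=> c) = c.
Proof. by rewrite /kexp -mulr_suml P_sum1 mul1r. Qed.

Lemma kexpt_cst t x (c : R) : kexpt t x (fun=> c) = c.
Proof.
elim: t => [|t IH]; first by rewrite kexpt0.
by rewrite kexptS; under eq_fun do rewrite kexp_cst.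
Qed.

Lemma kexpB_cst x f (c : R) : kexp x (fun y => f y - c) = kexp x f - c.
Proof.
rewrite /kexp -[c in RHS]mul1r -(P_sum1 x) mulr_suml -sumrB.
by apply: eq_bigr => y _; rewrite mulrBr.
Qed.

Lemma kexp_sqr_ge x f : 0 <= f x -> f x <= kexp x f ->
  f x ^+ 2 + kexp x (fun y => (f y - f x) ^+ 2) <= kexp x (fun y => f y ^+ 2).
Proof.
move=> fx_ge0 sub.
have -> : kexp x (fun y => f y ^+ 2)
    = f x ^+ 2 + kexp x (fun y => (f y - f x) ^+ 2) + f x *+ 2 * (kexp x f - f x).
  rewrite -kexpB_cst /kexp mulr_sumr -[f x ^+ 2]mul1r -(P_sum1 x) mulr_suml.
  by rewrite -!big_split; apply: eq_bigr => y _ /=; ring.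
by rewrite lerDl mulr_ge0 ?mulrn_wge0 ?subr_ge0.
Qed.

Lemma kexpt_submartingale t x f :
  (forall y, f y <= kexp y f) -> f x <= kexpt t x f.
Proof.
move=> sub; elim: t => [|t IH]; first by rewrite kexpt0.
by rewrite kexptS; apply: le_trans IH (ler_kexpt _ _ sub).
Qed.

Lemma kexpt_drift t x g a (d : R) :
  (forall y, g y + d * a y <= kexp y g) ->
  g x + d * \sum_(0 <= s < t) kexpt s x a <= kexpt t x g.
Proof.
move=> gain; elim: t => [|t IH]; first by rewrite big_geq // mulr0 addr0 kexpt0.
rewrite big_nat_recr //= mulrDr addrA kexptS.
by apply: le_trans (ler_kexpt _ _ gain); rewrite kexptD kexptZ lerD2r.
Qed.

Lemma kpowE t x z : kpow t x z = kexpt t x (fun y => (y == z)%:R).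
Proof.
rewrite /kexpt (bigD1 z) //= eqxx mulr1 big1 ?addr0 // => y yz.
by rewrite (negPf yz) mulr0.
Qed.

Lemma kpow_le1 t x y : kpow t x y <= 1.
Proof.
rewrite kpowE -[leRHS](kexpt_cst t x); apply: ler_kexpt => z /=.
by case: (z == y); rewrite ?ler01 ?lexx.
Qed.

Lemma kpow_absorbing_nondecreasing x z :
  P z z = 1 -> nondecreasing_seq (fun t => kpow t x z).
Proof.
move=> Pzz; apply/nondecreasing_seqP => t /=.
rewrite (bigD1 z) //= Pzz mulr1 lerDl.
by apply: sumr_ge0 => y _; rewrite mulr_ge0 ?kpow_ge0.
Qed.

End KernelPowers.

Lemma exists_term_le_of_bounded_sums (R : archiRealFieldType) (u : nat -> R) (B eps : R) :
  0 < eps -> (forall t, \sum_(0 <= s < t) u s <= B) -> exists t, u t <= eps.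
Proof.
move=> eps_gt0 sumB; apply: contrapT => no_small.
have big t : eps < u t by rewrite ltNge; apply/negP => small; apply: no_small; exists t.
have B_ge0 : 0 <= B by apply: le_trans (sumB 0); rewrite big_geq.
pose T := Num.bound (B / eps).
have : B < T%:R * eps by rewrite -ltr_pdivrMr // archi_boundP // divr_ge0 // ltW.
apply/negP; rewrite -leNgt; apply: le_trans (sumB T).
rewrite mulr_natl -[T in _ *+ T]subn0 -sumr_const_nat.
by apply: ler_sum => s _; apply: ltW.
Qed.

Lemma nneseries_le_of_sums_le (R : realType) (u : nat -> R) (B : R) :
  (forall t, 0 <= u t) -> (forall t, \sum_(0 <= s < t) u s <= B) ->
  (\sum_(0 <= t <oo) (u t)%:E <= B%:E)%E.
Proof.
move=> u_ge0 sumB; apply: lime_le.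
  by apply: is_cvg_nneseries => t _ _; rewrite lee_fin.
by apply: nearW => t; rewrite sumEFin lee_fin.
Qed.

Lemma sum_pushforward (R : pzSemiRingType) (I J K : finType) (P : I -> J -> bool)
    (a : I -> J -> R) (g : I -> J -> K) (f : K -> R) :
  \sum_k (\sum_i \sum_(j | P i j) a i j * (g i j == k)%:R) * f k
    = \sum_i \sum_(j | P i j) a i j * f (g i j).
Proof.
under eq_bigr do rewrite mulr_suml.
rewrite exchange_big; apply: eq_bigr => i _.
under eq_bigr do rewrite mulr_suml.
rewrite exchange_big; apply: eq_bigr => j _.
rewrite (bigD1 (g i j)) //= eqxx mulr1 big1 ?addr0 // => k kg.
by rewrite eq_sym (negPf kg) mulr0 mul0r.
Qed.

(* The two fixpoints have the same body. *)
Lemma moranPtE (R : realType) (V : finType) (e : rel V) (lam r : R) :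
  moranPt e lam r = kpow (moranP e lam r).
Proof. by []. Qed.

(** * The Moran kernel *)

Section MoranProcess.
Variables (R : realType) (V : finType) (e : rel V) (lam r : R).
Hypothesis e_sym : symmetric e.
Hypothesis deg_gt0 : forall u, (0 < deg e u)%N.
Hypothesis r_ge1 : 1 <= r.
Hypothesis lam01 : 0 <= lam <= 1.
Hypothesis V_gt0 : (0 < #|V|)%N.
Implicit Types (S : {set V}) (u v w : V).

Local Notation nV := (#|V|%:R : R).
Local Notation dg u := ((deg e u)%:R : R).
Local Notation F S := (total_fit r S).
Local Notation W S v := (nbr_fit e r S v).

Lemma fit_ge1 S u : 1 <= fit r S u.
Proof. by rewrite /fit; case: ifP. Qed.

Lemma fit_le S u : fit r S u <= r.
Proof. by rewrite /fit; case: ifP. Qed.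

Lemma fit_gt0 S u : 0 < fit r S u.
Proof. exact: lt_le_trans ltr01 (fit_ge1 S u). Qed.

Lemma nV_gt0 : 0 < nV.
Proof. by rewrite ltr0n. Qed.

Lemma dg_gt0 u : 0 < dg u.
Proof. by rewrite ltr0n. Qed.

Lemma sum_nbr_cst (c : R) v : \sum_(w | e v w) c = c * dg v.
Proof.
rewrite (eq_bigl (fun w => w \in [set w | e v w])); last by move=> w; rewrite inE.
by rewrite sumr_const mulr_natr.
Qed.

Lemma deg_le_nbr_fit S v : dg v <= W S v.
Proof.
by rewrite -[dg v]mul1r -sum_nbr_cst /nbr_fit; apply: ler_sum => w _; apply: fit_ge1.
Qed.

Lemma nbr_fit_le S v : W S v <= r * dg v.
Proof. by rewrite -sum_nbr_cst /nbr_fit; apply: ler_sum => w _; apply: fit_le. Qed.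

Lemma nbr_fit_gt0 S v : 0 < W S v.
Proof. exact: lt_le_trans (dg_gt0 v) (deg_le_nbr_fit S v). Qed.

Lemma total_fit_le S : F S <= r * nV.
Proof.
have -> : r * nV = \sum_(w : V) r by rewrite sumr_const mulr_natr.
by apply: ler_sum => w _; apply: fit_le.
Qed.

Lemma card_le_total_fit S : nV <= F S.
Proof.
have -> : nV = \sum_(w : V) 1 by rewrite sumr_const.
by apply: ler_sum => w _; apply: fit_ge1.
Qed.

Lemma total_fit_gt0 S : 0 < F S.
Proof. exact: lt_le_trans nV_gt0 (card_le_total_fit S). Qed.

Lemma sum_edges_sym (G : V -> V -> R) :
  \sum_v \sum_(u | e v u) G u v = \sum_u \sum_(v | e u v) G u v.
Proof.
rewrite (exchange_big_dep xpredT) //=; apply: eq_bigr => u _.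
by apply: eq_bigl => v; rewrite e_sym.
Qed.

Definition repl_prob S u v : R :=
  lam * (fit r S u / F S * (dg u)^-1) + (1 - lam) * (nV^-1 * (fit r S u / W S v)).

Lemma repl_prob_ge0 S u v : 0 <= repl_prob S u v.
Proof.
case/andP: lam01 => lam_ge0 lam_le1.
rewrite addr_ge0 // mulr_ge0 ?subr_ge0 // !mulr_ge0 // ?invr_ge0 ?ltW //;
  by rewrite ?fit_gt0 ?total_fit_gt0 ?dg_gt0 ?nV_gt0 ?nbr_fit_gt0.
Qed.

Lemma sum_repl_prob S : \sum_u \sum_(v | e u v) repl_prob S u v = 1.
Proof.
have Bd : \sum_u \sum_(v | e u v) fit r S u / F S * (dg u)^-1 = 1.
  transitivity (\sum_u fit r S u / F S).
    by apply: eq_bigr => u _; rewrite sum_nbr_cst mulfVK // gt_eqF ?dg_gt0.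
  by rewrite -mulr_suml mulfV // gt_eqF ?total_fit_gt0.
have dB : \sum_u \sum_(v | e u v) nV^-1 * (fit r S u / W S v) = 1.
  rewrite -(sum_edges_sym (fun u v => nV^-1 * (fit r S u / W S v))).
  transitivity (\sum_(v : V) nV^-1).
    apply: eq_bigr => v _; rewrite -mulr_sumr -mulr_suml.
    by rewrite mulfV ?mulr1 // gt_eqF ?nbr_fit_gt0.
  by rewrite sumr_const -(mulr_natr nV^-1) mulVf // gt_eqF ?nV_gt0.
rewrite /repl_prob.
under eq_bigr do rewrite big_split -(mulr_sumr _ _ _ lam) -(mulr_sumr _ _ _ (1 - lam)) /=.
by rewrite big_split -(mulr_sumr _ _ _ lam) -(mulr_sumr _ _ _ (1 - lam)) /= Bd dB; ring.
Qed.

Lemma moranP_ge0 S S' : 0 <= moranP e lam r S S'.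
Proof.
case/andP: lam01 => lam_ge0 lam_le1.
rewrite addr_ge0 // mulr_ge0 ?subr_ge0 //;
  apply: sumr_ge0 => u _; apply: sumr_ge0 => v _;
  by rewrite !mulr_ge0 // ?invr_ge0 ?ltW ?fit_gt0 ?total_fit_gt0 ?nbr_fit_gt0 ?nV_gt0 ?dg_gt0.
Qed.

Lemma moran_kexp S (f : {set V} -> R) :
  kexp (moranP e lam r) S f
    = \sum_u \sum_(v | e u v) repl_prob S u v * f (upd S u v).
Proof.
rewrite /kexp /moranP; under eq_bigr do rewrite mulrDl -!mulrA.
rewrite big_split /= -!mulr_sumr !sum_pushforward.
rewrite (sum_edges_sym (fun u v => nV^-1 * (fit r S u / W S v) * f (upd S u v))).
rewrite !mulr_sumr -big_split; apply: eq_bigr => u _.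
rewrite !mulr_sumr -big_split; apply: eq_bigr => v _.
by rewrite /repl_prob /=; ring.
Qed.

Lemma moranP_sum1 S : \sum_S' moranP e lam r S S' = 1.
Proof.
transitivity (kexp (moranP e lam r) S (fun=> 1)).
  by apply: eq_bigr => S' _; rewrite mulr1.
rewrite moran_kexp -[RHS](sum_repl_prob S).
by apply: eq_bigr => u _; apply: eq_bigr => v _; rewrite mulr1.
Qed.

Lemma moranP_setT : moranP e lam r [set: V] [set: V] = 1.
Proof.
transitivity (kexp (moranP e lam r) [set: V] (fun S => (S == [set: V])%:R)).
  rewrite /kexp (bigD1 [set: V]) //= eqxx mulr1 big1 ?addr0 // => S SV.
  by rewrite (negPf SV) mulr0.
rewrite moran_kexp -[RHS](sum_repl_prob [set: V]).
apply: eq_bigr => u _; apply: eq_bigr => v _.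
by rewrite /upd finset.in_setT finset.setUT eqxx mulr1.
Qed.

(** * The degree potential *)

Definition unabsorbed S := (S != finset.set0) && (S != [set: V]).

Variable alpha : R.
Hypothesis deg_almost_regular : forall u v, dg u <= alpha * dg v.
Hypothesis alpha_ge1 : 1 <= alpha.
Hypothesis alpha_sqr_le_r : alpha ^+ 2 <= r.
Hypothesis e_connected : graph_connected e.

Definition degsum S : R := \sum_(w in S) dg w.

Definition degsum_jump S u v : R := ((u \in S)%:R - (v \in S)%:R) * dg v.

Lemma degsum_upd S u v : degsum (upd S u v) = degsum S + degsum_jump S u v.
Proof.
rewrite /degsum /upd /degsum_jump; case: ifP => uS; case: (boolP (v \in S)) => vS /=.
- have -> : v |: S = S by apply/setP => w; rewrite !inE; case: eqP => // ->.
  by rewrite subrr mul0r addr0.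
- by rewrite big_setU1 //= subr0 mul1r addrC.
- by rewrite (big_setD1 v vS) /= sub0r mulN1r addrAC subrr add0r.
- have -> : S :\ v = S.
    by apply/setP => w; rewrite !inE; case: eqP => // ->; rewrite (negPf vS).
  by rewrite subrr mul0r addr0.
Qed.

Lemma degsum_ge0 S : 0 <= degsum S.
Proof. by apply: sumr_ge0 => w _; rewrite ler0n. Qed.

Lemma degsum_le_setT S : degsum S <= degsum [set: V].
Proof.
rewrite /degsum big_mkcond [leRHS]big_mkcond /=.
by apply: ler_sum => w _; rewrite finset.in_setT; case: ifP; rewrite ?ler0n.
Qed.

Lemma moran_kexp_degsum_diff (g : R -> R) S :
  kexp (moranP e lam r) S (fun S' => g (degsum S' - degsum S))
    = \sum_u \sum_(v | e u v) repl_prob S u v * g (degsum_jump S u v).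
Proof.
rewrite moran_kexp; apply: eq_bigr => u _; apply: eq_bigr => v _.
by rewrite degsum_upd addrAC subrr add0r.
Qed.

(* The Birth-death part needs [alpha ^+ 2 <= r]; the death-Birth part only
   needs [deg <= nbr_fit <= r * deg]. *)
Lemma repl_prob_balance S u v : u \in S -> v \notin S ->
  repl_prob S v u * dg u <= repl_prob S u v * dg v.
Proof.
move=> uS vS; case/andP: lam01 => lam_ge0 lam_le1.
have F_gt0 := total_fit_gt0 S; have Wu := nbr_fit_gt0 S u; have Wv := nbr_fit_gt0 S v.
have du := dg_gt0 u; have dv := dg_gt0 v.
have Bd : 1 / F S * (dg v)^-1 * dg u <= r / F S * (dg u)^-1 * dg v.
  rewrite -subr_ge0.
  have -> : r / F S * (dg u)^-1 * dg v - 1 / F S * (dg v)^-1 * dg u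
      = (r * dg v ^+ 2 - dg u ^+ 2) / (F S * dg u * dg v) by field; rewrite !gt_eqF.
  apply: divr_ge0; last by rewrite !mulr_ge0 ?ltW.
  rewrite subr_ge0; apply: le_trans (_ : _ <= (alpha * dg v) ^+ 2) _.
    by rewrite !expr2 ler_pM ?ler0n.
  by rewrite exprMn ler_wpM2r ?sqr_ge0.
have dB : nV^-1 * (1 / W S u) * dg u <= nV^-1 * (r / W S v) * dg v.
  rewrite -subr_ge0.
  have -> : nV^-1 * (r / W S v) * dg v - nV^-1 * (1 / W S u) * dg u
      = (W S u * (r * dg v) - dg u * W S v) / (nV * W S u * W S v).
    by field; rewrite !gt_eqF ?nV_gt0.
  apply: divr_ge0; last by rewrite !mulr_ge0 ?ltW ?nV_gt0.
  by rewrite subr_ge0 ler_pM ?ler0n ?deg_le_nbr_fit ?nbr_fit_le ?ltW.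
rewrite /repl_prob /fit uS (negPf vS) (mulrDl _ _ (dg u)) (mulrDl _ _ (dg v)).
rewrite -![lam * _ * _]mulrA -![(1 - lam) * _ * _]mulrA.
by rewrite lerD // ler_wpM2l ?subr_ge0.
Qed.

Lemma degsum_drift S :
  0 <= \sum_u \sum_(v | e u v) repl_prob S u v * degsum_jump S u v.
Proof.
pose out u v := ((u \in S) && (v \notin S))%:R * repl_prob S u v * dg v.
pose inw u v := ((v \in S) && (u \notin S))%:R * repl_prob S u v * dg v.
have jumpE u v : repl_prob S u v * degsum_jump S u v = out u v - inw u v.
  by rewrite /out /inw /degsum_jump; case: (u \in S); case: (v \in S) => /=; ring.
under eq_bigr do under eq_bigr do rewrite jumpE.
under eq_bigr do rewrite sumrB.
rewrite sumrB (sum_edges_sym (fun u v => inw v u)) -sumrB.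
apply: sumr_ge0 => u _; rewrite -sumrB; apply: sumr_ge0 => v _.
rewrite subr_ge0 /out /inw; case uS: (u \in S); case vS: (v \in S);
  by rewrite /= ?mul0r ?mul1r ?repl_prob_balance ?uS ?vS.
Qed.

Lemma degsum_submartingale S : degsum S <= kexp (moranP e lam r) S degsum.
Proof.
rewrite -subr_ge0 -(kexpB_cst moranP_sum1) (moran_kexp_degsum_diff id).
exact: degsum_drift.
Qed.

Lemma boundary_edge S : S != finset.set0 -> S != [set: V] ->
  exists u v, [/\ e u v, u \in S & v \notin S].
Proof.
case/set0Pn => x xS; rewrite -finset.subTset => /subsetPn [y _ yS].
have /connectP [p p_path y_last] := e_connected x y.
rewrite y_last {y y_last} in yS.
elim: p x xS p_path yS => [|z p IH] x xS /=; first by rewrite xS.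
case/andP => exz p_path yS; case zS: (z \in S); first exact: IH zS p_path yS.
by exists x, z; rewrite zS.
Qed.

Lemma repl_prob_mutant_lb S u v : u \in S ->
  dg v / (nV * alpha) <= repl_prob S u v * dg v ^+ 2.
Proof.
move=> uS; case/andP: lam01 => lam_ge0 lam_le1.
have a_gt0 : 0 < alpha := lt_le_trans ltr01 alpha_ge1.
have n_gt0 := nV_gt0; have du := dg_gt0 u; have dv := dg_gt0 v.
have F_gt0 := total_fit_gt0 S; have Wv := nbr_fit_gt0 S v.
have Bd : dg v / (nV * alpha) <= r / F S * (dg u)^-1 * dg v ^+ 2.
  rewrite -subr_ge0.
  have -> : r / F S * (dg u)^-1 * dg v ^+ 2 - dg v / (nV * alpha)
      = (dg v * (r * nV * (alpha * dg v)) - dg v * (F S * dg u))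
        / (F S * dg u * (nV * alpha)).
    by field; rewrite !gt_eqF.
  apply: divr_ge0; last by rewrite !mulr_ge0 ?ltW.
  rewrite subr_ge0; apply: ler_wpM2l; first exact: ler0n.
  by apply: ler_pM; rewrite ?ler0n ?total_fit_le ?deg_almost_regular // ltW.
have dB : dg v / (nV * alpha) <= nV^-1 * (r / W S v) * dg v ^+ 2.
  rewrite -subr_ge0.
  have -> : nV^-1 * (r / W S v) * dg v ^+ 2 - dg v / (nV * alpha)
      = (alpha * (dg v * (r * dg v)) - dg v * W S v) / (nV * W S v * alpha).
    by field; rewrite !gt_eqF.
  apply: divr_ge0; last by rewrite !mulr_ge0 ?ltW.
  rewrite subr_ge0; apply: le_trans (_ : _ <= dg v * (r * dg v)) _.
    by apply: ler_wpM2l; rewrite ?ler0n ?nbr_fit_le.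
  by rewrite ler_peMl // !mulr_ge0 ?ler0n // (le_trans ler01).
rewrite /repl_prob /fit uS mulrDl -[lam * _ * _]mulrA -[(1 - lam) * _ * _]mulrA.
rewrite [leLHS](_ : _ = lam * (dg v / (nV * alpha)) + (1 - lam) * (dg v / (nV * alpha))).
  by rewrite lerD // ler_wpM2l ?subr_ge0.
by ring.
Qed.

Lemma degsum_sq_gain x0 S :
  degsum S ^+ 2 + dg x0 / (nV * alpha ^+ 2) * (unabsorbed S)%:R
    <= kexp (moranP e lam r) S (fun S' => degsum S' ^+ 2).
Proof.
apply: le_trans (kexp_sqr_ge moranP_sum1 (degsum_ge0 S) (degsum_submartingale S)).
rewrite lerD2l (moran_kexp_degsum_diff (fun x => x ^+ 2)).
have term_ge0 u v : 0 <= repl_prob S u v * degsum_jump S u v ^+ 2.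
  by rewrite mulr_ge0 ?repl_prob_ge0 ?sqr_ge0.
case: (boolP (unabsorbed S)) => [/andP [S_neq0 S_neqT] | _]; last first.
  by rewrite mulr0; apply: sumr_ge0 => u _; apply: sumr_ge0 => v _.
have [u [v [euv uS vS]]] := boundary_edge S_neq0 S_neqT.
rewrite (bigD1 u) //= (bigD1 v) //= -addrA mulr1.
apply: le_trans (_ : _ <= repl_prob S u v * degsum_jump S u v ^+ 2) _; last first.
  rewrite lerDl; apply: addr_ge0; apply: sumr_ge0 => w _; first exact: term_ge0.
  by apply: sumr_ge0 => w' _; exact: term_ge0.
rewrite /degsum_jump uS (negPf vS) subr0 mul1r.
apply: le_trans (repl_prob_mutant_lb v uS).
have a_gt0 : 0 < alpha := lt_le_trans ltr01 alpha_ge1.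
rewrite -subr_ge0 (_ : _ - _ = (alpha * dg v - dg x0) / (nV * alpha ^+ 2)).
  apply: divr_ge0; first by rewrite subr_ge0 deg_almost_regular.
  by rewrite mulr_ge0 ?exprn_ge0 ?ler0n // ltW.
by field; rewrite !gt_eqF ?nV_gt0.
Qed.

Lemma deg_le_card v : dg v <= nV.
Proof. by rewrite ler_nat /deg max_card. Qed.

Lemma degsum_setT_le x : degsum [set: V] <= nV * alpha * dg x.
Proof.
apply: le_trans (_ : _ <= \sum_(w in [set: V]) alpha * dg x) _.
  by apply: ler_sum => w _; apply: deg_almost_regular.
by rewrite sumr_const cardsT -mulrA mulr_natl.
Qed.

Variable S0 : {set V}.

Lemma not_absorbedE t : not_absorbed e lam r S0 t
  = kexpt (moranP e lam r) t S0 (fun S => (unabsorbed S)%:R).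
Proof.
rewrite /not_absorbed /kexpt moranPtE big_mkcond; apply: eq_bigr => S _.
by rewrite /unabsorbed; case: ifP; rewrite ?mulr1 ?mulr0.
Qed.

Lemma sum_not_absorbed_le t :
  \sum_(0 <= s < t) not_absorbed e lam r S0 s <= r ^+ 2 * nV ^+ 4.
Proof.
case/card_gt0P: V_gt0 => x0 _.
have a_gt0 : 0 < alpha := lt_le_trans ltr01 alpha_ge1.
have n_gt0 := nV_gt0; have d_gt0 := dg_gt0 x0.
have delta_gt0 : 0 < dg x0 / (nV * alpha ^+ 2) by rewrite divr_gt0 ?mulr_gt0 ?exprn_gt0.
have top : kexpt (moranP e lam r) t S0 (fun S => degsum S ^+ 2) <= (nV * alpha * dg x0) ^+ 2.
  rewrite -[leRHS](kexpt_cst moranP_sum1 t S0); apply: (ler_kexpt moranP_ge0) => S.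
  by rewrite !expr2 ler_pM ?degsum_ge0 // (le_trans (degsum_le_setT S) (degsum_setT_le x0)).
have := le_trans (kexpt_drift moranP_ge0 t S0 (degsum_sq_gain x0)) top.
under eq_bigr do rewrite -not_absorbedE.
set X := \sum_(0 <= s < t) _ => drift.
have deltaX : dg x0 / (nV * alpha ^+ 2) * X <= (nV * alpha * dg x0) ^+ 2.
  by apply: le_trans drift; rewrite lerDr sqr_ge0.
suff : dg x0 / (nV * alpha ^+ 2) * X <= dg x0 / (nV * alpha ^+ 2) * (r ^+ 2 * nV ^+ 4).
  by rewrite ler_pM2l.
apply: le_trans deltaX _; rewrite -subr_ge0.
rewrite (_ : _ - _ = dg x0 * nV ^+ 2 * (nV * r ^+ 2 - alpha ^+ 4 * dg x0) / alpha ^+ 2);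
  last by field; rewrite !gt_eqF.
have a4 : alpha ^+ 4 <= r ^+ 2.
  have -> : alpha ^+ 4 = alpha ^+ 2 * alpha ^+ 2 by rewrite -exprD.
  by rewrite [r ^+ 2]expr2 ler_pM // exprn_ge0 // ltW.
apply: divr_ge0; last exact: exprn_ge0 (ltW a_gt0).
rewrite !mulr_ge0 ?exprn_ge0 ?ler0n // subr_ge0 mulrC.
by rewrite ler_pM ?exprn_ge0 ?deg_le_card // ltW.
Qed.

Lemma not_absorbed_ge0 t : 0 <= not_absorbed e lam r S0 t.
Proof. by apply: sumr_ge0 => S _; rewrite moranPtE (kpow_ge0 moranP_ge0). Qed.

Lemma absorption_time_le :
  (absorption_time e lam r S0 <= (r ^+ 2 * nV ^+ 4)%:E)%E.
Proof. exact: nneseries_le_of_sums_le not_absorbed_ge0 sum_not_absorbed_le. Qed.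

Variable x0 : V.
Hypothesis x0_in_S0 : x0 \in S0.

Lemma hit_or_unabsorbed_lb t :
  (nV * alpha)^-1 <= moranPt e lam r t S0 [set: V] + not_absorbed e lam r S0 t.
Proof.
have a_gt0 : 0 < alpha := lt_le_trans ltr01 alpha_ge1.
have x0_le : dg x0 <= degsum S0.
  by rewrite /degsum (big_setD1 x0 x0_in_S0) /= lerDl sumr_ge0 // => w _; rewrite ler0n.
have E_le : kexpt (moranP e lam r) t S0 degsum <= degsum [set: V] *
    (kpow (moranP e lam r) t S0 [set: V] + not_absorbed e lam r S0 t).
  rewrite not_absorbedE kpowE -kexptD -kexptZ; apply: (ler_kexpt moranP_ge0) => S.
  rewrite /unabsorbed; case: (eqVneq S [set: V]) => [->|S_neqT] /=.
    by rewrite andbF addr0 mulr1.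
  case: (eqVneq S finset.set0) => [->|S_neq0] /=.
    by rewrite /degsum big_set0 add0r mulr0.
  by rewrite add0r mulr1 degsum_le_setT.
have hit_ge0 : 0 <= kpow (moranP e lam r) t S0 [set: V] + not_absorbed e lam r S0 t.
  by rewrite addr_ge0 ?not_absorbed_ge0 ?(kpow_ge0 moranP_ge0).
have := le_trans x0_le (le_trans (kexpt_submartingale moranP_ge0 t S0 degsum_submartingale)
  (le_trans E_le (ler_wpM2r hit_ge0 (degsum_setT_le x0)))).
rewrite moranPtE -[_^-1]mulr1 ler_pdivrMl ?mulr_gt0 ?nV_gt0 // => key.
by rewrite -(ler_pM2l (dg_gt0 x0)) mulr1 mulrA [dg x0 * _]mulrC.
Qed.

Lemma fix_prob_ge : (2 * r)^-1 * (nV ^+ 2)^-1 <= fix_prob e lam r S0.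
Proof.
have a_gt0 : 0 < alpha := lt_le_trans ltr01 alpha_ge1.
have n_gt0 := nV_gt0.
have mono : nondecreasing_seq (fun t => moranPt e lam r t S0 [set: V]).
  by rewrite moranPtE; apply: (kpow_absorbing_nondecreasing moranP_ge0 _ moranP_setT).
have cvg : cvgn (fun t => moranPt e lam r t S0 [set: V] : R^o).
  apply: nondecreasing_is_cvgn mono _; exists 1 => _ [t _ <-].
  by rewrite moranPtE (kpow_le1 moranP_ge0 moranP_sum1).
have eps_gt0 : 0 < (2 * nV * alpha)^-1 by rewrite invr_gt0 !mulr_gt0.
have [t small] := exists_term_le_of_bounded_sums eps_gt0 sum_not_absorbed_le.
apply: le_trans (nondecreasing_cvgn_le mono cvg t).
have hit : (2 * nV * alpha)^-1 <= moranPt e lam r t S0 [set: V].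
  have := hit_or_unabsorbed_lb t.
  have -> : (nV * alpha)^-1 = (2 * nV * alpha)^-1 + (2 * nV * alpha)^-1.
    by field; rewrite !gt_eqF.
  lra.
have a_le_r : alpha <= r.
  by apply: le_trans alpha_sqr_le_r; rewrite expr2 ler_peMl // ltW.
have n_le_n2 : nV <= nV ^+ 2 by rewrite expr2 ler_peMl ?ler1n // ltW.
apply: le_trans hit; rewrite -invfM lef_pV2 ?posrE ?mulr_gt0 ?exprn_gt0 //;
  last exact: lt_le_trans ltr01 r_ge1.
by rewrite -!mulrA ler_pM2l // mulrC ler_pM // ltW.
Qed.

End MoranProcess.

Lemma connected_deg_gt0 (V : finType) (e : rel V) :
  graph_connected e -> (2 <= #|V|)%N -> forall u, (0 < deg e u)%N.
Proof.
move=> e_conn V_ge2 u.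
have : (0 < #|[set~ u]|)%N by rewrite cardsC1 -subn1 subn_gt0.
case/card_gt0P => w; rewrite in_setC1 => w_neq_u.
case/connectP: (e_conn u w) => [[|z p] /=]; first by move=> _ wu; rewrite wu eqxx in w_neq_u.
by case/andP => euz _ _; apply/card_gt0P; exists z; rewrite inE.
Qed.

Theorem mainTheorem8 (R : realType) (r : R) (hr : 0 < r) :
  exists C c : R, 0 < C /\ 0 < c /\
    forall (alpha : R) (V : finType) (e : rel V),
      1 <= alpha ->
      simple_graph e -> graph_connected e -> (2 <= #|V|)%N ->
      almost_regular e alpha ->
      alpha ^+ 2 <= r ->
      forall (lam : R), 0 <= lam <= 1 ->
      forall S0 : {set V}, S0 != finset.set0 ->
        (absorption_time e lam r S0 <= (C * (#|V|%:R) ^+ 4)%:E)%E /\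
        c * ((#|V|%:R) ^+ 2)^-1 <= fix_prob e lam r S0.
Proof.
exists (r ^+ 2), ((2 * r)^-1); split; first exact: exprn_gt0.
split; first by rewrite invr_gt0 mulr_gt0.
move=> alpha V e alpha_ge1 [e_sym _] e_conn V_ge2 e_reg alpha_sqr_le_r lam lam01.
move=> S0 /set0Pn [x0 x0_in_S0].
have r_ge1 : 1 <= r.
  have alpha_ge0 : 0 <= alpha := le_trans ler01 alpha_ge1.
  by apply: le_trans alpha_sqr_le_r; rewrite expr2 (le_trans alpha_ge1) // ler_peMl.
have V_gt0 : (0 < #|V|)%N := ltnW V_ge2.
have deg_gt0 := connected_deg_gt0 e_conn V_ge2.
split.
  exact: (absorption_time_le e_sym deg_gt0 r_ge1 lam01 V_gt0 e_reg alpha_ge1 alpha_sqr_le_r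
    e_conn S0).
exact: (fix_prob_ge e_sym deg_gt0 r_ge1 lam01 V_gt0 e_reg alpha_ge1 alpha_sqr_le_r
  e_conn x0_in_S0).
Qed.
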